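(* Let $n,k\ge 1$ and let $\varphi$ be a tame automorphism of $\mathbf{C}[x_1,\dots,x_{n+k}]$. Partition the indices $\{1,\dots,n+k\}$ into $\{i_1,\dots,i_n\}$ and $\{j_1,\dots,j_k\}$. For polynomials $q_1,\dots,q_k\in\mathbf{C}[x_{i_1},\dots,x_{i_n}]$, let $\varphi_{q_1,\dots,q_k}$ be the $\mathbf{C}$-algebra endomorphism of $\mathbf{C}[x_{i_1},\dots,x_{i_n}]$ sending each $x_{i_l}$ ($1\le l\le n$) to the polynomial obtained from $\varphi(x_{i_l})$ by substituting $q_m$ for $x_{j_m}$, $1\le m\le k$. Then there exist polynomials $q_1,\dots,q_k\in\mathbf{C}[x_{i_1},\dots,x_{i_n}]$ such that $\varphi_{q_1,\dots,q_k}$ is injective.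
   Context: An automorphism of $\mathbf{C}[x_1,\dots,x_N]$ is elementary if it fixes all variables except one, $x_i$, and maps $x_i$ to $x_i + f(x_1,\dots,x_{i-1},x_{i+1},\dots,x_N)$; it is tame if it is a composition of elementary and linear automorphisms. *)

From HB Require Import structures.
From mathcomp Require Import all_boot all_order all_algebra all_fingroup.
From mathcomp Require Import reals.
From mathcomp Require Import complex.
From mathcomp Require Import mpoly.
Set Implicit Arguments. Unset Strict Implicit. Unset Printing Implicit Defensive.
Import GRing.Theory Num.Theory.
Local Open Scope ring_scope.

(* An endomorphism of K[x_0..x_{N-1}] is represented by the N-tuple of
   images of the variables; it acts by p |-> p \mPo f (comp_mpoly f p). *)
Notation endo K N := (N.-tuple {mpoly K[N]}).

Definition endo_id (K : comRingType) (N : nat) : endo K N :=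
  [tuple 'X_i | i < N].

Definition endo_comp (K : comRingType) (N : nat) (phi psi : endo K N) : endo K N :=
  [tuple comp_mpoly phi (tnth psi i) | i < N].

Definition elementary (K : comRingType) (N : nat) (e : endo K N) : Prop :=
  exists (i : 'I_N) (f : {mpoly K[N]}),
    (forall m, m \in msupp f -> m i = 0%N) /\
    forall j : 'I_N, tnth e j = (if j == i then 'X_i + f else 'X_j).

Definition linear_aut (K : comUnitRingType) (N : nat) (e : endo K N) : Prop :=
  exists A : 'M[K]_N, A \in unitmx /\
    forall i : 'I_N, tnth e i = \sum_(j < N) A i j *: 'X_j.

Inductive tame (K : comUnitRingType) (N : nat) : endo K N -> Prop :=
  | tame_id : tame (endo_id K N)
  | tame_elem e phi : elementary e -> tame phi -> tame (endo_comp e phi)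
  | tame_lin e phi : linear_aut e -> tame phi -> tame (endo_comp e phi).

(* Given an ordered partition of {0..n+k-1} into (i_1..i_n) = sigma (lshift l)
   and (j_1..j_k) = sigma (rshift m), and q : 'I_k -> K[y_1..y_n]
   (y_l standing for x_{i_l}), the substitution sending x_{i_l} to y_l and
   x_{j_m} to q_m. *)
Definition subst_tuple (K : comRingType) (n k : nat) (sigma : 'S_(n + k))
  (q : 'I_k -> {mpoly K[n]}) : (n + k).-tuple {mpoly K[n]} :=
  [tuple match split ((sigma^-1)%g i) with
         | inl l => 'X_l
         | inr m => q m
         end | i < n + k].

Definition restricted_endo (K : comRingType) (n k : nat) (sigma : 'S_(n + k))
  (phi : endo K (n + k)) (q : 'I_k -> {mpoly K[n]}) : endo K n :=
  [tuple comp_mpoly (subst_tuple sigma q) (tnth phi (sigma (lshift k l))) | l < n].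

From HB Require Import structures.
From mathcomp Require Import all_boot all_order all_algebra all_fingroup.
From mathcomp Require Import reals complex mpoly.

(* Over a field of characteristic zero, an endomorphism t of K[y_1..y_n] whose
   Jacobian determinant is a non-zero polynomial is injective: if p o t = 0 with
   p of minimal degree, the chain rule puts the row ((d_i p) o t)_i in the left
   kernel of the Jacobian matrix of t, so every d_i p o t vanishes, hence every
   d_i p = 0, p is constant and p = 0.
   The Jacobian matrix of a tame automorphism is invertible, so its value P at
   the origin is an invertible matrix over K. Substituting linear forms
   q = C y for the x_j, the Jacobian matrix of phi_q at the origin is
   P_II + P_IJ C, where I, J are the two blocks of indices. Such a C making it
   invertible exists: if Q = P^-1, so that P_II Q_II + P_IJ Q_JI = 1, and x is
   chosen with det (1 + x Q_II) and det (x + P_II) non-zero, then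
   C = x Q_JI (1 + x Q_II)^-1 gives P_II + P_IJ C = (x + P_II) (1 + x Q_II)^-1. *)

Set Implicit Arguments. Unset Strict Implicit. Unset Printing Implicit Defensive.
Import GRing.Theory Num.Theory.
Local Open Scope ring_scope.

Lemma mderivXU (R : nzRingType) n (i j : 'I_n) :
  ('X_i : {mpoly R[n]})^`M(j) = (i == j)%:R.
Proof.
rewrite mderivX mnm1E; case: eqP => [<-|_]; last by rewrite scale0r.
by rewrite scale1r -{1}[U_(i)%MM]add0m addmK mpolyX0.
Qed.

Section ChainRule.
Variables (R : comNzRingType) (N M : nat) (t : N.-tuple {mpoly R[M]}).

Lemma mderiv_comp_mpoly (p : {mpoly R[N]}) (j : 'I_M) :
  (p \mPo t)^`M(j) = \sum_(i < N) (p^`M(i) \mPo t) * (tnth t i)^`M(j).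
Proof.
move: p j; pose chain q := forall j, (q \mPo t)^`M(j) =
  \sum_(i < N) (q^`M(i) \mPo t) * (tnth t i)^`M(j).
have chainD p q : chain p -> chain q -> chain (p + q).
  move=> hp hq l; rewrite comp_mpolyD mderivD hp hq -big_split /=.
  by apply: eq_bigr => i _; rewrite mderivD comp_mpolyD mulrDl.
have chainZ c p : chain p -> chain (c *: p).
  move=> hp l; rewrite comp_mpolyZ mderivZ hp scaler_sumr /=.
  by apply: eq_bigr => i _; rewrite mderivZ comp_mpolyZ scalerAl.
have chainM p q : chain p -> chain q -> chain (p * q).
  move=> hp hq l; rewrite rmorphM /= mderivM hp hq mulr_suml mulr_sumr -big_split /=.
  apply: eq_bigr => i _; rewrite mderivM rmorphD !rmorphM /= mulrDl -!mulrA.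
  by congr (_ * _ + _); rewrite mulrC.
have chain1 : chain 1.
  move=> l; rewrite comp_mpoly1 mderivC big1 // => i _.
  by rewrite mderivC comp_mpoly0 mul0r.
have chainX i : chain 'X_i.
  move=> l; rewrite comp_mpolyXU -tnth_nth (bigD1 i) //= big1 => [|i' ne_i'i].
    by rewrite mderivXU eqxx comp_mpoly1 mul1r addr0.
  by rewrite mderivXU eq_sym (negbTE ne_i'i) comp_mpoly0 mul0r.
have chainXm m : chain 'X_[m].
  rewrite mpolyXE_id; elim/big_rec: _ => [|i p _ hp]; first exact: (chain1).
  apply: (chainM) hp; elim: (m i) => [|e ih]; first by rewrite expr0.
  by rewrite exprS; apply: (chainM) => //; apply: (chainX).
elim/mpolyind => [|c m p _ _ hp]; last by apply: chainD => //; apply: chainZ.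
by move=> l; rewrite comp_mpoly0 mderiv0 big1 // => i _; rewrite mderiv0 comp_mpoly0 mul0r.
Qed.

End ChainRule.

Definition jacobian (R : nzRingType) (N M : nat) (t : N.-tuple {mpoly R[M]}) :
  'M[{mpoly R[M]}]_(N, M) := \matrix_(i, j) (tnth t i)^`M(j).

Lemma jacobian_comp (R : comNzRingType) (N M L : nat)
    (t : N.-tuple {mpoly R[M]}) (u : M.-tuple {mpoly R[L]}) :
  jacobian [tuple tnth t i \mPo u | i < N] = map_mx (comp_mpoly u) (jacobian t) *m jacobian u.
Proof.
apply/matrixP => i j; rewrite !mxE tnth_mktuple mderiv_comp_mpoly.
by apply: eq_bigr => l _; rewrite !mxE.
Qed.

Lemma msize_mderiv (R : nzRingType) n (p : {mpoly R[n]}) i :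
  (msize (p^`M(i)) <= (msize p).-1)%N.
Proof.
rewrite [X in (X <= _)%N]msizeE; apply/bigmax_leqP_seq => m m_supp _.
rewrite mcoeff_msupp mcoeff_mderiv in m_supp.
have mU_supp : (m + U_(i))%MM \in msupp p.
  by rewrite mcoeff_msupp; apply: contraNneq m_supp => ->; rewrite mul0rn.
have := msize_mdeg_lt mU_supp; rewrite mdegD mdeg1 addn1.
by case: (msize p) => // s; rewrite ltnS.
Qed.

Lemma mderiv_eq0_mpolyC (R : numDomainType) n (p : {mpoly R[n]}) :
  (forall i, p^`M(i) = 0) -> p = (p@_0)%:MP.
Proof.
move=> p'0; apply/mpolyP => m; rewrite mcoeffC.
have [->|m_neq0] := eqVneq m 0%MM; first by rewrite mulr1.
have [i m_i_neq0] : exists i, m i != 0%N.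
  apply/existsP; apply: contraNT m_neq0 => /existsPn m_eq0.
  by apply/eqP/mnmP => i; rewrite mnm0E; apply/eqP/negbNE.
rewrite -(submK (_ : U_(i) <= m)%MM) ?lep1mP //.
have /eqP := congr1 (mcoeff (m - U_(i))) (p'0 i).
by rewrite mcoeff_mderiv mcoeff0 mulrn_eq0 /= mulr0 => /eqP.
Qed.

Lemma mulmx_det_neq0_eq0 (R : idomainType) n (A : 'M[R]_n) (v : 'rV[R]_n) :
  \det A != 0 -> v *m A = 0 -> v = 0.
Proof.
move=> detA_neq0 /(congr1 (mulmx^~ (\adj A))).
rewrite -mulmxA mul_mx_adj mul0mx mul_mx_scalar => /matrixP vA0.
apply/matrixP => i j; have /eqP := vA0 i j.
by rewrite !mxE mulf_eq0 (negbTE detA_neq0) => /eqP.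
Qed.

Section JacobianCriterion.
Variables (R : numDomainType) (n : nat) (t : n.-tuple {mpoly R[n]}).
Hypothesis det_jacobian_neq0 : \det (jacobian t) != 0.

Lemma comp_mpoly_mderiv_eq0 (p : {mpoly R[n]}) :
  p \mPo t = 0 -> forall i, p^`M(i) \mPo t = 0.
Proof.
move=> pt0 i; pose v := \row_i (p^`M(i) \mPo t).
suff /rowP /(_ i) : v = 0 by rewrite !mxE.
apply: mulmx_det_neq0_eq0 det_jacobian_neq0 _; apply/rowP => j.
rewrite !mxE; transitivity ((p \mPo t)^`M(j)); last by rewrite pt0 mderiv0.
by rewrite mderiv_comp_mpoly; apply: eq_bigr => l _; rewrite !mxE.
Qed.

Lemma comp_mpoly_inj : injective (comp_mpoly t).
Proof.
suff kernel0 s p : (msize p <= s)%N -> p \mPo t = 0 -> p = 0.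
  move=> p q pq; apply/eqP; rewrite -subr_eq0; apply/eqP.
  by apply: (kernel0 (msize (p - q))); rewrite // comp_mpolyB pq subrr.
elim: s p => [|s ih] p p_le pt0; first by apply/eqP; rewrite -msize_poly_eq0 -leqn0.
have p'0 i : p^`M(i) = 0.
  apply: ih (comp_mpoly_mderiv_eq0 pt0 i); apply: leq_trans (msize_mderiv p i) _.
  by rewrite -ltnS; case: (msize p) p_le.
move: pt0; rewrite (mderiv_eq0_mpolyC p'0) comp_mpolyC => /eqP.
by rewrite mpolyC_eq0 => /eqP ->.
Qed.

End JacobianCriterion.

Lemma unitmx_map (R S : comUnitRingType) (f : {rmorphism R -> S}) n (A : 'M[R]_n) :
  A \in unitmx -> map_mx f A \in unitmx.
Proof. by rewrite !unitmxE det_map_mx; apply: rmorph_unit. Qed.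

Definition linear_forms (R : nzRingType) (n k : nat) (C : 'M[R]_(k, n)) (m : 'I_k) :
  {mpoly R[n]} := \sum_(l < n) C m l *: 'X_l.

Lemma mderiv_linear_forms (R : nzRingType) n k (C : 'M[R]_(k, n)) m j :
  (linear_forms C m)^`M(j) = (C m j)%:MP.
Proof.
rewrite raddf_sum (bigD1 j) //= big1 => [|l ne_lj].
  by rewrite mderivZ mderivXU eqxx addr0 -mul_mpolyC mulr1.
by rewrite mderivZ mderivXU (negbTE ne_lj) scaler0.
Qed.

Section TameJacobian.
Variables (K : idomainType) (N : nat).

Lemma jacobian_endo_id : jacobian (endo_id K N) = 1%:M.
Proof. by apply/matrixP => i j; rewrite !mxE tnth_mktuple mderivXU. Qed.

Lemma elementary_jacobian_unit (e : endo K N) : elementary e -> jacobian e \in unitmx.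
Proof.
case=> i [f [f_free_i def_e]].
have f'i0 : f^`M(i) = 0.
  apply/mpolyP => m; rewrite mcoeff_mderiv mcoeff0.
  have [/f_free_i|/memN_msupp_eq0 ->] := boolP ((m + U_(i))%MM \in msupp f).
    by rewrite mnmDE mnm1E eqxx addn1.
  by rewrite mul0rn.
pose W : 'M[{mpoly K[N]}]_N := \matrix_(a, b) (if a == i then f^`M(b) else 0).
have -> : jacobian e = 1%:M + W.
  apply/matrixP => a b; rewrite !mxE def_e.
  by case: eqP => [->|_]; rewrite ?mderivD mderivXU ?addr0.
have W2 : W *m W = 0.
  apply/matrixP => a b; rewrite !mxE (bigD1 i) //= big1 => [|c ne_ci].
    by rewrite !mxE eqxx f'i0 if_same mul0r addr0.
  by rewrite [W c b]mxE (negbTE ne_ci) mulr0.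
have /mulmx1_unit[] // : (1%:M + W) *m (1%:M - W) = 1%:M.
by rewrite mulmxDl !mulmxBr !mul1mx mulmx1 W2 subr0 subrK.
Qed.

Lemma linear_aut_jacobian_unit (e : endo K N) : linear_aut e -> jacobian e \in unitmx.
Proof.
case=> A [A_unit def_e].
suff -> : jacobian e = map_mx (@mpolyC N K) A by apply: unitmx_map.
by apply/matrixP => a b; rewrite !mxE def_e -/(linear_forms A a) mderiv_linear_forms.
Qed.

Lemma tame_jacobian_unit (phi : endo K N) : tame phi -> jacobian phi \in unitmx.
Proof.
elim=> [|e {}phi e_elem _ IHphi|e {}phi e_lin _ IHphi].
- by rewrite jacobian_endo_id unitmx1.
- by rewrite /endo_comp jacobian_comp unitmx_mul elementary_jacobian_unit ?andbT ?unitmx_map.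
- by rewrite /endo_comp jacobian_comp unitmx_mul linear_aut_jacobian_unit ?andbT ?unitmx_map.
Qed.

End TameJacobian.

Lemma exists_nat_nonroot (R : numDomainType) (p : {poly R}) :
  p != 0 -> exists m : nat, ~~ root p m%:R.
Proof.
move=> p_neq0; pose s : seq R := [seq i%:R | i <- iota 0 (size p)].
have s_uniq : uniq s.
  by rewrite map_inj_uniq ?iota_uniq // => a b /eqP; rewrite eqr_nat => /eqP.
have : ~~ all (root p) s.
  by apply/negP => /(max_poly_roots p_neq0)/(_ s_uniq); rewrite size_map size_iota ltnn.
by case/allPn => _ /mapP[m _ ->]; exists m.
Qed.

Lemma exists_det_pencils_neq0 (R : numFieldType) n (A B : 'M[R]_n) :
  exists x : R, (\det (1%:M + x *: A) != 0) && (\det (x%:M + B) != 0).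
Proof.
pose pA : {poly R} := \det (1%:M + 'X *: map_mx polyC A).
have pA_eval x : pA.[x] = \det (1%:M + x *: A).
  rewrite -horner_evalE -det_map_mx; congr (\det _); apply/matrixP => a b.
  by rewrite !mxE /= horner_evalE !hornerE hornerMn hornerE.
have pB_eval x : (char_poly (- B)).[x] = \det (x%:M + B).
  rewrite -horner_evalE -det_map_mx; congr (\det _); apply/matrixP => a b.
  by rewrite !mxE /= horner_evalE !hornerE hornerMn hornerE opprK.
have pA_neq0 : pA != 0.
  apply: contra_neq (oner_neq0 R) => pA0.
  by rewrite -(det1 _ n) -[1%:M]addr0 -(scale0r A) -pA_eval pA0 horner0.
have [m] := exists_nat_nonroot (mulf_neq0 pA_neq0 (monic_neq0 (char_poly_monic (- B)))).
by rewrite rootM negb_or /root pA_eval pB_eval; exists m%:R.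
Qed.

Lemma ulsubmx_add_mul_factor (R : comUnitRingType) n k
    (M1 : 'M[R]_n) (M2 : 'M[R]_(n, k)) (N1 : 'M[R]_n) (N2 : 'M[R]_(k, n)) (x : R) :
  M1 *m N1 + M2 *m N2 = 1%:M -> 1%:M + x *: N1 \in unitmx ->
  M1 + M2 *m (x *: N2 *m invmx (1%:M + x *: N1)) = (x%:M + M1) *m invmx (1%:M + x *: N1).
Proof.
move=> MN1 N1_unit; apply: (canRL (mulmxK N1_unit)).
rewrite mulmxDl -mulmxA mulmxKV // mulmxDr mulmx1 -!scalemxAr -addrA -scalerDr.
by rewrite MN1 scalemx1 addrC.
Qed.

Lemma exists_ulsubmx_add_mul_unit (R : numFieldType) n k (P : 'M[R]_(n + k)) :
  P \in unitmx -> exists C : 'M[R]_(k, n), ulsubmx P + ursubmx P *m C \in unitmx.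
Proof.
move=> P_unit; set Q := invmx P.
have PQ1 : ulsubmx P *m ulsubmx Q + ursubmx P *m dlsubmx Q = 1%:M.
  have PQ : P *m Q = 1%:M by apply: mulmxV.
  rewrite -{1}[P]submxK -[Q]submxK mulmx_block (scalar_mx_block n k) in PQ.
  by have [] := eq_block_mx PQ.
have [x /andP[det1_neq0 det2_neq0]] := exists_det_pencils_neq0 (ulsubmx Q) (ulsubmx P).
have N1_unit : 1%:M + x *: ulsubmx Q \in unitmx by rewrite unitmxE unitfE.
exists (x *: dlsubmx Q *m invmx (1%:M + x *: ulsubmx Q)).
by rewrite ulsubmx_add_mul_factor // unitmx_mul unitmx_inv N1_unit unitmxE unitfE det2_neq0.
Qed.

Section Substitution.
Variables (R : comNzRingType) (n k : nat) (sigma : 'S_(n + k)) (q : 'I_k -> {mpoly R[n]}).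

Lemma tnth_subst_tuple_lshift (l : 'I_n) :
  tnth (subst_tuple sigma q) (sigma (lshift k l)) = 'X_l.
Proof. by rewrite tnth_mktuple permK (unsplitK (inl _ l)). Qed.

Lemma tnth_subst_tuple_rshift (m : 'I_k) :
  tnth (subst_tuple sigma q) (sigma (rshift n m)) = q m.
Proof. by rewrite tnth_mktuple permK (unsplitK (inr _ m)). Qed.

Lemma meval0_comp_subst_tuple (p : {mpoly R[n + k]}) :
  (forall m, (q m).@[fun _ => 0] = 0) ->
  (p \mPo subst_tuple sigma q).@[fun _ => 0] = p.@[fun _ => 0].
Proof.
move=> q0; rewrite comp_mpoly_meval; apply: meval_eq => i.
by rewrite tnth_mktuple; case: split => [l|m]; rewrite ?mevalXU ?q0.
Qed.

End Substitution.

Definition jacobian0 (R : comNzRingType) (N M : nat) (t : N.-tuple {mpoly R[M]}) :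
  'M[R]_(N, M) := map_mx (meval (fun _ => 0)) (jacobian t).

Lemma meval0_linear_forms (R : comNzRingType) n k (C : 'M[R]_(k, n)) m :
  (linear_forms C m).@[fun _ => 0] = 0.
Proof. by rewrite rmorph_sum big1 // => l _ /=; rewrite mevalZ mevalXU mulr0. Qed.

Lemma jacobian_restricted_endo0 (R : comNzRingType) n k (sigma : 'S_(n + k))
    (phi : endo R (n + k)) (C : 'M[R]_(k, n)) :
  let P := row_perm sigma (col_perm sigma (jacobian0 phi)) in
  jacobian0 (restricted_endo sigma phi (linear_forms C)) = ulsubmx P + ursubmx P *m C.
Proof.
move=> P; have subst0 p :
    (p \mPo subst_tuple sigma (linear_forms C)).@[fun _ => 0] = p.@[fun _ => 0].
  by apply: meval0_comp_subst_tuple => m; apply: meval0_linear_forms.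
apply/matrixP => l j; rewrite !mxE tnth_mktuple mderiv_comp_mpoly rmorph_sum /=.
rewrite (reindex_inj (@perm_inj _ sigma)) big_split_ord /=; congr (_ + _).
  rewrite (bigD1 j) //= big1 => [|l' ne_l'j].
    by rewrite tnth_subst_tuple_lshift mderivXU eqxx mulr1 addr0 subst0.
  by rewrite tnth_subst_tuple_lshift mderivXU (negbTE ne_l'j) mulr0 rmorph0.
apply: eq_bigr => m _; rewrite rmorphM /= tnth_subst_tuple_rshift mderiv_linear_forms.
by rewrite subst0 mevalC !mxE.
Qed.

Theorem tame_restricted_endo_inj (K : numFieldType) n k (phi : endo K (n + k))
    (sigma : 'S_(n + k)) :
  tame phi ->
  exists q : 'I_k -> {mpoly K[n]}, injective (comp_mpoly (restricted_endo sigma phi q)).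
Proof.
move=> phi_tame; pose P := row_perm sigma (col_perm sigma (jacobian0 phi)).
have P_unit : P \in unitmx.
  rewrite /P row_permE col_permE !unitmx_mul !unitmx_perm /= andbT.
  exact/unitmx_map/tame_jacobian_unit.
have [C PC_unit] := exists_ulsubmx_add_mul_unit P_unit.
exists (linear_forms C); apply: comp_mpoly_inj.
apply: contraTneq PC_unit => det0.
by rewrite -jacobian_restricted_endo0 unitmxE det_map_mx det0 rmorph0 unitr0.
Qed.

Unset Implicit Arguments.

Theorem proposition2p4 (R : realType) (n k : nat) (hn : (1 <= n)%N) (hk : (1 <= k)%N)
  (phi : endo R[i] (n + k)) (hphi : tame phi) (sigma : 'S_(n + k)) :
  exists q : 'I_k -> {mpoly R[i][n]},
    injective (comp_mpoly (restricted_endo sigma phi q)).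
Proof. exact: tame_restricted_endo_inj. Qed.
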